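(* There is an absolute constant $c>0$ such that for all positive integers $t,N$ with $t\le \frac{N^{2(e^4-1)}}{36}$, $$\inf_{g}\ \sup_{R}\ \mathbb{E}\big[W_1(\Delta_R,g(\mathbf S))\big]\ \ge\ c\max\Big\{\frac1t,\ \frac{1}{\sqrt{t\log N}}\Big\},$$ where the supremum is over all probability distributions $R$ on $[0,1]^2$ and the infimum is over all estimators $g$ mapping the sample $\mathbf S$ to a probability distribution on $[-1,1]$.
   Context: Sampling model: given a probability distribution $R$ on $[0,1]^2$ and positive integers $N,t$, draw $(p_i,q_i)\sim R$ independently for $i=1,\dots,N$, and then, independently given these, $X_i\sim \mathrm{Binomial}(t,p_i)$ and $Y_i\sim\mathrm{Binomial}(t,q_i)$. The observed sample is $\mathbf S=\{(X_i,Y_i)\}_{i=1}^N$. For $(p,q)\sim R$ let $\Delta_R$ denote the distribution of $\delta=q-p$ on $[-1,1]$. $W_1$ denotes the Wasserstein-1 distance: $W_1(P,Q)=\sup_{f}\int f\,(dP-dQ)$, the supremum over all $1$-Lipschitz functions $f$ on the common support space. *)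

From Stdlib Require Import Reals Lra List ClassicalEpsilon.
Import ListNotations.
Open Scope R_scope.

Definition in01 (x : R) : Prop := 0 <= x <= 1.
Definition inPM1 (x : R) : Prop := -1 <= x <= 1.

Definition cont_sq (f : R -> R -> R) : Prop :=
  forall p q, in01 p -> in01 q -> forall eps, 0 < eps ->
  exists delta, 0 < delta /\
    forall p' q', in01 p' -> in01 q' -> Rabs (p' - p) < delta -> Rabs (q' - q) < delta ->
      Rabs (f p' q' - f p q) < eps.

Definition cont_pm1 (f : R -> R) : Prop :=
  forall x, inPM1 x -> forall eps, 0 < eps ->
  exists delta, 0 < delta /\
    forall y, inPM1 y -> Rabs (y - x) < delta -> Rabs (f y - f x) < eps.

(* A probability distribution on the compact set [0,1]^2, represented (Riesz)
   by its expectation functional on continuous functions: linear, positive,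
   normalised.  Values on non-continuous arguments are irrelevant. *)
Record dist2 : Type := {
  E2 : (R -> R -> R) -> R;
  E2_add : forall f g, cont_sq f -> cont_sq g ->
     E2 (fun p q => f p q + g p q) = E2 f + E2 g;
  E2_scal : forall a f, cont_sq f -> E2 (fun p q => a * f p q) = a * E2 f;
  E2_pos : forall f, cont_sq f -> (forall p q, in01 p -> in01 q -> 0 <= f p q) -> 0 <= E2 f;
  E2_one : E2 (fun _ _ => 1) = 1 }.

(* A probability distribution on [-1,1], represented likewise. *)
Record dist1 : Type := {
  E1 : (R -> R) -> R;
  E1_add : forall f g, cont_pm1 f -> cont_pm1 g -> E1 (fun x => f x + g x) = E1 f + E1 g;
  E1_scal : forall a f, cont_pm1 f -> E1 (fun x => a * f x) = a * E1 f;
  E1_pos : forall f, cont_pm1 f -> (forall x, inPM1 x -> 0 <= f x) -> 0 <= E1 f;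
  E1_one : E1 (fun _ => 1) = 1 }.

Definition Delta_E (Rd : dist2) (f : R -> R) : R := E2 Rd (fun p q => f (q - p)).

Definition Rsup (A : R -> Prop) : R := epsilon (inhabits 0) (fun w => is_lub A w).

Definition lip1 (f : R -> R) : Prop :=
  forall x y, inPM1 x -> inPM1 y -> Rabs (f x - f y) <= Rabs (x - y).

(* Wasserstein-1 distance (Kantorovich-Rubinstein dual form) between Delta_R and mu *)
Definition W1 (Rd : dist2) (mu : dist1) : R :=
  Rsup (fun w => exists f, lip1 f /\ w = Delta_E Rd f - E1 mu f).

Definition binom_pmf (t x : nat) (p : R) : R :=
  C t x * p ^ x * (1 - p) ^ (t - x).

Definition pairs_upto (t : nat) : list (nat * nat) :=
  list_prod (seq 0 (S t)) (seq 0 (S t)).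

Fixpoint samples (N t : nat) : list (list (nat * nat)) :=
  match N with
  | O => [ [] ]
  | S n => flat_map (fun s => map (fun xy => xy :: s) (pairs_upto t)) (samples n t)
  end.

Definition sample_prob (Rd : dist2) (t : nat) (s : list (nat * nat)) : R :=
  fold_right Rmult 1
    (map (fun xy => E2 Rd (fun p q => binom_pmf t (fst xy) p * binom_pmf t (snd xy) q)) s).

Definition risk (t N : nat) (Rd : dist2) (g : list (nat * nat) -> dist1) : R :=
  fold_right Rplus 0
    (map (fun s => sample_prob Rd t s * W1 Rd (g s)) (samples N t)).

(* Le Cam's two-point method.  Both priors put p = 0 and let q take the values
   1/2 + (k - n/2) h, k = 0..n, with weights proportional to binom n k restricted to even,
   resp. odd, k.  The difference of the weights is (-1)^k binom n k / 2^(n-1), an n-th finite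
   difference, so the m-th moments of q - 1/2 agree for m < n and differ by at most 2 (nh/2)^m
   otherwise.  Expanding the chi-square distance between the two laws of Y relative to
   Binomial(t, 1/2) in these moments bounds it by the sum over m >= n of 4 C(t,m) (nh)^(2m);
   by Cauchy-Schwarz and tensorization the N-sample laws are then 1/2-close in L1 as soon as
   t (nh)^2 <= n/16 and 6 N <= 2^n.  On the other side, the 1-Lipschitz function
   (h/pi) cos(pi (x - x_0)/h) is +-h/pi on alternate atoms, so W1(Delta_even, mu) +
   W1(Delta_odd, mu) >= 2h/pi for every mu, and one of the two risks is at least h/(2 pi).
   The choice n = log2 N + 4, h = 1/(4 sqrt(nt)) gives the rate 1/sqrt(t ln N); when
   16 t < log2 N + 4, the choice n = t + 1, h = 1/(t + 1) matches all moments that binomial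
   observations can see and gives the rate 1/t.  The assumption t <= N^(2(e^4-1))/36 is only
   used to exclude N = 1. *)

From Stdlib Require Import Reals Lra Lia List ClassicalEpsilon FunctionalExtensionality.
Open Scope R_scope.

Lemma Rabs_le_inv x y : Rabs x <= y -> -y <= x <= y.
Proof.
  intros H. pose proof (Rle_abs x). pose proof (Rle_abs (-x)).
  rewrite Rabs_Ropp in *. lra.
Qed.

Lemma ln_le x y : 0 < x -> x <= y -> ln x <= ln y.
Proof. intros Hx [H|H]; [left; apply ln_increasing | subst]; lra. Qed.

Lemma Rdiv_nonneg a b : 0 <= a -> 0 < b -> 0 <= a / b.
Proof. intros Ha Hb. apply Rmult_le_pos; [exact Ha | left; apply Rinv_0_lt_compat, Hb]. Qed.

Definition lsum {A} (l : list A) (F : A -> R) : R := fold_right Rplus 0 (map F l).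

Lemma lsum_cons {A} (a : A) l F : lsum (a :: l) F = F a + lsum l F.
Proof. reflexivity. Qed.

Lemma lsum_app {A} (l1 l2 : list A) F : lsum (l1 ++ l2) F = lsum l1 F + lsum l2 F.
Proof.
  induction l1 as [|a l1 IH]; [unfold lsum; simpl; lra|].
  simpl. rewrite !lsum_cons, IH. lra.
Qed.

Lemma lsum_map {A B} (h : A -> B) l F : lsum (map h l) F = lsum l (fun x => F (h x)).
Proof. induction l as [|a l IH]; [reflexivity|]. rewrite map_cons, !lsum_cons, IH. reflexivity. Qed.

Lemma lsum_flat_map {A B} (G : A -> list B) l F :
  lsum (flat_map G l) F = lsum l (fun a => lsum (G a) F).
Proof.
  induction l as [|a l IH]; [reflexivity|].
  simpl flat_map. rewrite lsum_app, lsum_cons, IH. reflexivity.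
Qed.

Lemma lsum_ext {A} l (F G : A -> R) : (forall x, In x l -> F x = G x) -> lsum l F = lsum l G.
Proof.
  induction l as [|a l IH]; intros H; [reflexivity|].
  rewrite !lsum_cons, H, IH; [reflexivity | intros; apply H | ]; simpl; auto.
Qed.

Lemma lsum_le {A} l (F G : A -> R) : (forall x, In x l -> F x <= G x) -> lsum l F <= lsum l G.
Proof.
  induction l as [|a l IH]; intros H; [unfold lsum; simpl; lra|].
  rewrite !lsum_cons. apply Rplus_le_compat; [apply H | apply IH; intros; apply H]; simpl; auto.
Qed.

Lemma lsum_plus {A} l (F G : A -> R) : lsum l (fun x => F x + G x) = lsum l F + lsum l G.
Proof. induction l as [|a l IH]; [unfold lsum; simpl; lra|]. rewrite !lsum_cons, IH. lra. Qed.

Lemma lsum_minus {A} l (F G : A -> R) : lsum l (fun x => F x - G x) = lsum l F - lsum l G.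
Proof. induction l as [|a l IH]; [unfold lsum; simpl; lra|]. rewrite !lsum_cons, IH. lra. Qed.

Lemma lsum_scal {A} l (F : A -> R) c : lsum l (fun x => c * F x) = c * lsum l F.
Proof. induction l as [|a l IH]; [unfold lsum; simpl; lra|]. rewrite !lsum_cons, IH. lra. Qed.

Lemma lsum_scal_r {A} l (F : A -> R) c : lsum l (fun x => F x * c) = lsum l F * c.
Proof. induction l as [|a l IH]; [unfold lsum; simpl; lra|]. rewrite !lsum_cons, IH. lra. Qed.

Lemma lsum_nonneg {A} l (F : A -> R) : (forall x, In x l -> 0 <= F x) -> 0 <= lsum l F.
Proof.
  induction l as [|a l IH]; intros H; [unfold lsum; simpl; lra|].
  rewrite lsum_cons. apply Rplus_le_le_0_compat; [apply H | apply IH; intros; apply H]; simpl; auto.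
Qed.

Lemma lsum_prod {A B} (l1 : list A) (l2 : list B) F G :
  lsum (list_prod l1 l2) (fun xy => F (fst xy) * G (snd xy)) = lsum l1 F * lsum l2 G.
Proof.
  induction l1 as [|a l1 IH]; [unfold lsum; simpl; lra|].
  simpl list_prod. rewrite lsum_app, lsum_map, IH, lsum_cons. simpl. rewrite lsum_scal. lra.
Qed.

Lemma lsum_seq t F : lsum (seq 0 (S t)) F = sum_f_R0 F t.
Proof.
  induction t as [|t IH]; [unfold lsum; simpl; lra|].
  rewrite seq_S, lsum_app, IH, tech5. unfold lsum at 1; simpl. lra.
Qed.

Lemma sum_scal_l (A : nat -> R) n c : sum_f_R0 (fun k => c * A k) n = c * sum_f_R0 A n.
Proof. induction n as [|n IH]; simpl; [|rewrite IH]; lra. Qed.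

Lemma sum_div (A : nat -> R) n c : sum_f_R0 A n / c = sum_f_R0 (fun k => A k / c) n.
Proof. unfold Rdiv. rewrite Rmult_comm, scal_sum. apply sum_eq; intros; ring. Qed.

Lemma sum_zero n : sum_f_R0 (fun _ => 0) n = 0.
Proof. rewrite sum_cte. ring. Qed.

Lemma sum_nonneg (A : nat -> R) n : (forall k, (k <= n)%nat -> 0 <= A k) -> 0 <= sum_f_R0 A n.
Proof. intros H. rewrite <- (sum_zero n) at 1. apply sum_Rle, H. Qed.

Lemma sum_swap (F : nat -> nat -> R) a b :
  sum_f_R0 (fun i => sum_f_R0 (fun j => F i j) b) a
  = sum_f_R0 (fun j => sum_f_R0 (fun i => F i j) a) b.
Proof. induction a as [|a IH]; simpl; [reflexivity|]. rewrite IH, <- sum_plus. reflexivity. Qed.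

Lemma sum_sq (A : nat -> R) n :
  (sum_f_R0 A n) ^ 2 = sum_f_R0 (fun k => sum_f_R0 (fun l => A k * A l) n) n.
Proof.
  replace ((sum_f_R0 A n) ^ 2) with (sum_f_R0 A n * sum_f_R0 A n) by ring.
  rewrite scal_sum. apply sum_eq; intros k _. symmetry. apply sum_scal_l.
Qed.

Lemma sum_shift (g : nat -> R) n : sum_f_R0 (fun i => g (S i)) n = sum_f_R0 g (S n) - g O.
Proof. rewrite (decomp_sum g (S n)) by lia. simpl pred. lra. Qed.

Fixpoint binom (n k : nat) : R :=
  match n, k with
  | _, O => 1
  | O, S _ => 0
  | S n', S k' => binom n' k' + binom n' (S k')
  end.

Lemma binom_gt n k : (n < k)%nat -> binom n k = 0.
Proof.
  revert k; induction n as [|n IH]; intros k H; destruct k; try lia; simpl; [reflexivity|].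
  rewrite !IH by lia. lra.
Qed.

Lemma binom_n0 n : binom n 0 = 1.
Proof. destruct n; reflexivity. Qed.

Lemma binom_nonneg n k : 0 <= binom n k.
Proof.
  revert k; induction n as [|n IH]; intros [|k]; simpl; try lra.
  pose proof (IH k); pose proof (IH (S k)); lra.
Qed.

Lemma binom_sum n : sum_f_R0 (binom n) n = 2 ^ n.
Proof.
  induction n as [|n IH]; [simpl; lra|].
  rewrite decomp_sum by lia. simpl pred.
  replace (sum_f_R0 (fun i => binom (S n) (S i)) n) with
    (sum_f_R0 (binom n) n + sum_f_R0 (fun i => binom n (S i)) n)
    by (rewrite <- sum_plus; apply sum_eq; reflexivity).
  rewrite sum_shift, tech5, (binom_gt n (S n)), IH, !binom_n0 by lia. simpl. lra.
Qed.

(* [alt_binom_sum n f] is [(-1)^n] times the [n]-th forward difference of [f] at [0]. *)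
Definition alt_binom_sum (n : nat) (f : nat -> R) : R :=
  sum_f_R0 (fun k => (-1) ^ k * binom n k * f k) n.

Lemma alt_binom_sum_S n f :
  alt_binom_sum (S n) f = alt_binom_sum n f - alt_binom_sum n (fun k => f (S k)).
Proof.
  unfold alt_binom_sum. rewrite decomp_sum by lia. simpl pred.
  replace (sum_f_R0 (fun i => (-1) ^ S i * binom (S n) (S i) * f (S i)) n) with
    (sum_f_R0 (fun i => (-1) ^ S i * binom n (S i) * f (S i)) n -
     sum_f_R0 (fun i => (-1) ^ i * binom n i * f (S i)) n)
    by (rewrite <- minus_sum; apply sum_eq; intros; simpl; ring).
  rewrite (sum_shift (fun i => (-1) ^ i * binom n i * f i)), tech5, (binom_gt n (S n)) by lia.
  rewrite !binom_n0. simpl. ring.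
Qed.

Lemma alt_binom_sum_ext n f g : (forall k, f k = g k) -> alt_binom_sum n f = alt_binom_sum n g.
Proof. intros H. apply sum_eq; intros. rewrite H. reflexivity. Qed.

Lemma alt_binom_sum_minus n f g :
  alt_binom_sum n (fun k => f k - g k) = alt_binom_sum n f - alt_binom_sum n g.
Proof. unfold alt_binom_sum. rewrite <- minus_sum. apply sum_eq; intros; ring. Qed.

Lemma alt_binom_sum_zero n : alt_binom_sum n (fun _ => 0) = 0.
Proof.
  unfold alt_binom_sum. transitivity (sum_f_R0 (fun _ => 0) n);
    [apply sum_eq; intros; ring | apply sum_zero].
Qed.

Fixpoint poly_deg_le (d : nat) (f : nat -> R) : Prop :=
  match d with
  | O => forall k, f k = f O
  | S d' => poly_deg_le d' (fun k => f (S k) - f k)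
  end.

Lemma poly_deg_le_ext d f g : (forall k, f k = g k) -> poly_deg_le d f -> poly_deg_le d g.
Proof.
  revert f g; induction d as [|d IH]; simpl; intros f g H P.
  - intros k. rewrite <- !H. apply P.
  - eapply IH; [|exact P]. intros; simpl; rewrite !H; reflexivity.
Qed.

Lemma poly_deg_le_lin d f g a b :
  poly_deg_le d f -> poly_deg_le d g -> poly_deg_le d (fun k => a * f k + b * g k).
Proof.
  revert f g; induction d as [|d IH]; simpl; intros f g P Q.
  - intros k. rewrite P, Q. reflexivity.
  - eapply poly_deg_le_ext; [|apply (IH _ _ P Q)]. intros; simpl; ring.
Qed.

Lemma poly_deg_le_shift d f : poly_deg_le d f -> poly_deg_le d (fun k => f (S k)).
Proof.
  revert f; induction d as [|d IH]; simpl; intros f P.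
  - intros k. rewrite P, (P 1%nat). reflexivity.
  - apply (IH _ P).
Qed.

Lemma poly_deg_le_mul_lin d f c h :
  poly_deg_le d f -> poly_deg_le (S d) (fun k => (c + INR k * h) * f k).
Proof.
  revert f c; induction d as [|d IH]; intros f c P.
  - cbn -[INR]. simpl in P. intros k. rewrite !S_INR, (P (S k)), (P k), (P 1%nat). simpl INR. ring.
  - change (poly_deg_le (S d) (fun k => (c + INR (S k) * h) * f (S k) - (c + INR k * h) * f k)).
    apply poly_deg_le_ext
      with (f := fun k => 1 * ((c + INR k * h) * (f (S k) - f k)) + h * f (S k)).
    { intros k. rewrite S_INR. ring. }
    apply poly_deg_le_lin; [apply (IH (fun k => f (S k) - f k) c P) | apply poly_deg_le_shift, P].
Qed.

Lemma poly_deg_le_pow m c h : poly_deg_le m (fun k => (c + INR k * h) ^ m).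
Proof.
  induction m as [|m IH]; [simpl; reflexivity|].
  eapply poly_deg_le_ext; [|apply (poly_deg_le_mul_lin _ _ c h IH)]. reflexivity.
Qed.

Lemma alt_binom_sum_poly n d f : (d < n)%nat -> poly_deg_le d f -> alt_binom_sum n f = 0.
Proof.
  revert d f; induction n as [|n IH]; intros d f Hd P; [lia|].
  rewrite alt_binom_sum_S, <- alt_binom_sum_minus.
  destruct d as [|d].
  - rewrite (alt_binom_sum_ext _ _ (fun _ => 0))
      by (intros k; simpl in P; rewrite (P k), (P (S k)); ring).
    apply alt_binom_sum_zero.
  - rewrite (alt_binom_sum_ext _ _ (fun k => 0 - (f (S k) - f k))) by (intros; ring).
    rewrite alt_binom_sum_minus, alt_binom_sum_zero, (IH d); [ring | lia | exact P].
Qed.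

Lemma lip1_cont_pm1 f : lip1 f -> cont_pm1 f.
Proof.
  intros Hf x Hx eps He. exists eps. split; [exact He|].
  intros y Hy Hxy. eapply Rle_lt_trans; [apply Hf|]; assumption.
Qed.

Lemma lip1_diff_cont_sq f : lip1 f -> cont_sq (fun p q => f (q - p)).
Proof.
  intros Hf p q Hp Hq eps He. exists (eps / 2). split; [lra|].
  intros p' q' Hp' Hq' Hpp Hqq. unfold in01 in *.
  eapply Rle_lt_trans; [apply Hf; unfold inPM1; lra|].
  pose proof (Rabs_triang (q' - q) (- (p' - p))) as Htri. rewrite Rabs_Ropp in Htri.
  replace (q' - q + - (p' - p)) with (q' - p' - (q - p)) in Htri by ring. lra.
Qed.

Lemma lip1_opp f : lip1 f -> lip1 (fun x => -1 * f x).
Proof.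
  intros Hf x y Hx Hy. replace (-1 * f x - -1 * f y) with (- (f x - f y)) by ring.
  rewrite Rabs_Ropp. auto.
Qed.

Lemma lip1_add_const f c : lip1 f -> lip1 (fun x => f x + c).
Proof.
  intros Hf x y Hx Hy. replace (f x + c - (f y + c)) with (f x - f y) by ring. auto.
Qed.

Lemma lip1_const c : lip1 (fun _ => c).
Proof. intros x y _ _. rewrite Rminus_diag, Rabs_R0. apply Rabs_pos. Qed.

Lemma lip1_range f x : lip1 f -> inPM1 x -> f 0 - 1 <= f x <= f 0 + 1.
Proof.
  intros Hf Hx. unfold inPM1 in Hx.
  assert (H : Rabs (f x - f 0) <= Rabs (x - 0)) by (apply Hf; unfold inPM1; lra).
  rewrite Rminus_0_r in H. apply Rabs_le_inv in H.
  assert (Rabs x <= 1) by (apply Rabs_le; lra). lra.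
Qed.

Lemma E1_const (mu : dist1) c : E1 mu (fun _ => c) = c.
Proof.
  pose proof (E1_scal mu c (fun _ => 1) (lip1_cont_pm1 _ (lip1_const 1))) as H.
  rewrite E1_one, Rmult_1_r in H. exact H.
Qed.

Lemma E2_const (Rd : dist2) c : E2 Rd (fun _ _ => c) = c.
Proof.
  pose proof (E2_scal Rd c (fun _ _ => 1) (lip1_diff_cont_sq _ (lip1_const 1))) as H.
  rewrite E2_one, Rmult_1_r in H. exact H.
Qed.

Lemma E1_opp (mu : dist1) f : lip1 f -> E1 mu (fun x => -1 * f x) = - E1 mu f.
Proof. intros Hf. rewrite E1_scal by (apply lip1_cont_pm1, Hf). ring. Qed.

Lemma E1_lip_ge (mu : dist1) f : lip1 f -> f 0 - 1 <= E1 mu f.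
Proof.
  intros Hf.
  pose proof (E1_add mu f (fun _ => 1 - f 0) (lip1_cont_pm1 f Hf) (lip1_cont_pm1 _ (lip1_const _)))
    as Hadd.
  assert (Hpos : 0 <= E1 mu (fun x => f x + (1 - f 0))).
  { apply E1_pos; [apply lip1_cont_pm1, lip1_add_const, Hf|].
    intros x Hx. pose proof (lip1_range f x Hf Hx). lra. }
  rewrite E1_const in Hadd. lra.
Qed.

Lemma Delta_E_lip_le Rd f : lip1 f -> Delta_E Rd f <= f 0 + 1.
Proof.
  intros Hf. unfold Delta_E.
  set (h := fun x => -1 * f x + (f 0 + 1)).
  assert (Hh : lip1 h) by (apply lip1_add_const, lip1_opp, Hf).
  pose proof (E2_add Rd _ _ (lip1_diff_cont_sq f Hf) (lip1_diff_cont_sq h Hh)) as Hadd.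
  cbv beta in Hadd.
  replace (fun p q => f (q - p) + h (q - p)) with (fun _ _ : R => f 0 + 1) in Hadd
    by (do 2 (apply functional_extensionality; intros); unfold h; ring).
  assert (Hpos : 0 <= E2 Rd (fun p q => h (q - p))).
  { apply E2_pos; [apply lip1_diff_cont_sq, Hh|].
    intros p q Hp Hq. unfold in01 in *.
    pose proof (lip1_range f (q - p) Hf ltac:(unfold inPM1; lra)). unfold h. lra. }
  rewrite E2_const in Hadd. lra.
Qed.

Lemma W1_is_lub Rd mu :
  is_lub (fun w => exists f, lip1 f /\ w = Delta_E Rd f - E1 mu f) (W1 Rd mu).
Proof.
  unfold W1, Rsup. apply epsilon_spec.
  edestruct completeness as [m Hm]; [| |exists m; exact Hm].
  - exists 2. intros w [f [Hf ->]].
    pose proof (Delta_E_lip_le Rd f Hf). pose proof (E1_lip_ge mu f Hf). lra.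
  - exists (Delta_E Rd (fun _ => 0) - E1 mu (fun _ => 0)), (fun _ => 0).
    split; [apply lip1_const | reflexivity].
Qed.

Lemma W1_ge_lip Rd mu f : lip1 f -> Delta_E Rd f - E1 mu f <= W1 Rd mu.
Proof. intros Hf. apply (W1_is_lub Rd mu). exists f. split; [exact Hf | reflexivity]. Qed.

Lemma W1_nonneg Rd mu : 0 <= W1 Rd mu.
Proof.
  pose proof (W1_ge_lip Rd mu (fun _ => 0) (lip1_const 0)) as H.
  unfold Delta_E in H. rewrite E2_const, E1_const in H. lra.
Qed.

Definition pair_prob (Rd : dist2) (t : nat) (xy : nat * nat) : R :=
  E2 Rd (fun p q => binom_pmf t (fst xy) p * binom_pmf t (snd xy) q).

Lemma sample_prob_cons Rd t xy s :
  sample_prob Rd t (xy :: s) = pair_prob Rd t xy * sample_prob Rd t s.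
Proof. reflexivity. Qed.

Lemma lsum_samples_S N t (F : list (nat * nat) -> R) :
  lsum (samples (S N) t) F
  = lsum (samples N t) (fun s => lsum (pairs_upto t) (fun xy => F (xy :: s))).
Proof. cbn [samples]. rewrite lsum_flat_map. apply lsum_ext. intros s _. apply lsum_map. Qed.

Lemma Rabs_mul_sub_le a A b B :
  0 <= A -> 0 <= b -> Rabs (a * A - b * B) <= Rabs (a - b) * A + b * Rabs (A - B).
Proof.
  intros HA Hb. replace (a * A - b * B) with ((a - b) * A + b * (A - B)) by ring.
  eapply Rle_trans; [apply Rabs_triang|].
  rewrite !Rabs_mult, (Rabs_pos_eq A), (Rabs_pos_eq b) by lra. lra.
Qed.

Section Tensorization.
Variables (Ra Rb : dist2) (t : nat).
Hypothesis pair_prob_a_nonneg : forall xy, 0 <= pair_prob Ra t xy.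
Hypothesis pair_prob_b_nonneg : forall xy, 0 <= pair_prob Rb t xy.
Hypothesis pair_prob_a_sum : lsum (pairs_upto t) (pair_prob Ra t) = 1.
Hypothesis pair_prob_b_sum : lsum (pairs_upto t) (pair_prob Rb t) = 1.

Lemma sample_prob_nonneg Rd :
  (forall xy, 0 <= pair_prob Rd t xy) -> forall s, 0 <= sample_prob Rd t s.
Proof.
  intros H s. induction s as [|xy s IH]; [unfold sample_prob; simpl; lra|].
  rewrite sample_prob_cons. apply Rmult_le_pos; auto.
Qed.

Lemma sample_prob_sum Rd N :
  lsum (pairs_upto t) (pair_prob Rd t) = 1 -> lsum (samples N t) (sample_prob Rd t) = 1.
Proof.
  intros H. induction N as [|N IH]; [unfold lsum, sample_prob; simpl; lra|].
  rewrite lsum_samples_S, <- IH. apply lsum_ext. intros s _.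
  rewrite (lsum_ext _ _ (fun xy => pair_prob Rd t xy * sample_prob Rd t s)) by reflexivity.
  rewrite lsum_scal_r, H. ring.
Qed.

Lemma sample_prob_l1_le N T :
  lsum (pairs_upto t) (fun xy => Rabs (pair_prob Ra t xy - pair_prob Rb t xy)) <= T ->
  lsum (samples N t) (fun s => Rabs (sample_prob Ra t s - sample_prob Rb t s)) <= INR N * T.
Proof.
  intros HT.
  assert (T_nonneg : 0 <= T)
    by (eapply Rle_trans; [|exact HT]; apply lsum_nonneg; intros; apply Rabs_pos).
  induction N as [|N IH].
  { unfold lsum, sample_prob; simpl. rewrite Rminus_diag, Rabs_R0. lra. }
  rewrite lsum_samples_S.
  eapply Rle_trans.
  { apply lsum_le. intros s _.
    apply (lsum_le _ _ (fun xy => Rabs (pair_prob Ra t xy - pair_prob Rb t xy) * sample_prob Ra t s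
                        + pair_prob Rb t xy * Rabs (sample_prob Ra t s - sample_prob Rb t s))).
    intros xy _. rewrite !sample_prob_cons.
    apply Rabs_mul_sub_le; [apply sample_prob_nonneg | apply pair_prob_b_nonneg]; assumption. }
  rewrite (lsum_ext _ _ (fun s =>
      lsum (pairs_upto t) (fun xy => Rabs (pair_prob Ra t xy - pair_prob Rb t xy)) * sample_prob Ra t s
      + Rabs (sample_prob Ra t s - sample_prob Rb t s)))
    by (intros s _; rewrite lsum_plus, !lsum_scal_r, pair_prob_b_sum; ring).
  rewrite lsum_plus, lsum_scal, sample_prob_sum, S_INR by assumption. lra.
Qed.

(* Le Cam's two-point bound: on each sample, [pa * W1 Ra + pb * W1 Rb >= D * (pa - |pa - pb|)]. *)
Lemma risk_sum_ge N (g : list (nat * nat) -> dist1) D T :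
  (forall mu, W1 Ra mu + W1 Rb mu >= D) -> 0 <= D ->
  lsum (pairs_upto t) (fun xy => Rabs (pair_prob Ra t xy - pair_prob Rb t xy)) <= T ->
  INR N * T <= 1/2 ->
  risk t N Ra g + risk t N Rb g >= D / 2.
Proof.
  intros HW HD HT HNT.
  pose proof (sample_prob_l1_le N T HT) as Hdiff.
  change (lsum (samples N t) (fun s => sample_prob Ra t s * W1 Ra (g s)) +
          lsum (samples N t) (fun s => sample_prob Rb t s * W1 Rb (g s)) >= D / 2).
  rewrite <- lsum_plus.
  assert (H : lsum (samples N t)
                (fun s => D * (sample_prob Ra t s - Rabs (sample_prob Ra t s - sample_prob Rb t s)))
              <= lsum (samples N t)
                (fun s => sample_prob Ra t s * W1 Ra (g s) + sample_prob Rb t s * W1 Rb (g s))).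
  { apply lsum_le. intros s _.
    pose proof (sample_prob_nonneg Ra pair_prob_a_nonneg s).
    pose proof (sample_prob_nonneg Rb pair_prob_b_nonneg s).
    pose proof (HW (g s)). pose proof (W1_nonneg Ra (g s)). pose proof (W1_nonneg Rb (g s)).
    destruct (Rle_dec (sample_prob Ra t s) (sample_prob Rb t s)).
    - rewrite Rabs_left1 by lra. nra.
    - rewrite Rabs_pos_eq by lra. nra. }
  rewrite lsum_scal, lsum_minus, sample_prob_sum in H by assumption. nra.
Qed.

End Tensorization.

Lemma C_pos t y : 0 < C t y.
Proof.
  unfold C. apply Rdiv_lt_0_compat; [|apply Rmult_lt_0_compat]; apply INR_fact_lt_0.
Qed.

Lemma binom_pmf_nonneg t x p : in01 p -> 0 <= binom_pmf t x p.
Proof.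
  intros [H0 H1]. unfold binom_pmf. pose proof (C_pos t x).
  apply Rmult_le_pos; [apply Rmult_le_pos|]; [lra | apply pow_le; lra ..].
Qed.

Lemma binom_pmf_sum t p : sum_f_R0 (fun x => binom_pmf t x p) t = 1.
Proof. unfold binom_pmf. rewrite <- binomial. replace (p + (1 - p)) with 1 by ring. apply pow1. Qed.

Definition binom_mix (n : nat) (w q : nat -> R) (t y : nat) : R :=
  sum_f_R0 (fun k => w k * binom_pmf t y (q k)) n.

Section Atoms.
Variables (n : nat) (w q : nat -> R).
Hypothesis w_nonneg : forall k, 0 <= w k.
Hypothesis q_in01 : forall k, (k <= n)%nat -> in01 (q k).
Hypothesis w_sum : sum_f_R0 w n = 1.

Definition atoms_E (F : R -> R -> R) : R := sum_f_R0 (fun k => w k * F 0 (q k)) n.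

Lemma atoms_E_add f g :
  cont_sq f -> cont_sq g -> atoms_E (fun p q => f p q + g p q) = atoms_E f + atoms_E g.
Proof. intros _ _. unfold atoms_E. rewrite <- sum_plus. apply sum_eq; intros; ring. Qed.

Lemma atoms_E_scal a f : cont_sq f -> atoms_E (fun p q => a * f p q) = a * atoms_E f.
Proof. intros _. unfold atoms_E. rewrite <- sum_scal_l. apply sum_eq; intros; ring. Qed.

Lemma atoms_E_pos f :
  cont_sq f -> (forall p q, in01 p -> in01 q -> 0 <= f p q) -> 0 <= atoms_E f.
Proof.
  intros _ H. apply sum_nonneg. intros k Hk.
  apply Rmult_le_pos; [apply w_nonneg | apply H; [unfold in01; lra | apply q_in01, Hk]].
Qed.

Lemma atoms_E_one : atoms_E (fun _ _ => 1) = 1.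
Proof.
  unfold atoms_E. transitivity (sum_f_R0 w n); [apply sum_eq; intros; ring | exact w_sum].
Qed.

Definition atoms : dist2 := Build_dist2 atoms_E atoms_E_add atoms_E_scal atoms_E_pos atoms_E_one.

Lemma Delta_E_atoms f : Delta_E atoms f = sum_f_R0 (fun k => w k * f (q k - 0)) n.
Proof. reflexivity. Qed.

Lemma pair_prob_atoms t xy :
  pair_prob atoms t xy = binom_pmf t (fst xy) 0 * binom_mix n w q t (snd xy).
Proof. unfold binom_mix. rewrite <- sum_scal_l. apply sum_eq; intros; simpl; ring. Qed.

Lemma binom_mix_nonneg t y : 0 <= binom_mix n w q t y.
Proof.
  apply sum_nonneg. intros k Hk.
  apply Rmult_le_pos; [apply w_nonneg | apply binom_pmf_nonneg, q_in01, Hk].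
Qed.

Lemma binom_mix_sum t : sum_f_R0 (binom_mix n w q t) t = 1.
Proof.
  unfold binom_mix. rewrite sum_swap, <- w_sum at 1. apply sum_eq. intros k _.
  rewrite sum_scal_l, binom_pmf_sum. ring.
Qed.

Lemma pair_prob_atoms_nonneg t xy : 0 <= pair_prob atoms t xy.
Proof.
  rewrite pair_prob_atoms. apply Rmult_le_pos; [apply binom_pmf_nonneg; unfold in01; lra|].
  apply binom_mix_nonneg.
Qed.

Lemma pair_prob_atoms_sum t : lsum (pairs_upto t) (pair_prob atoms t) = 1.
Proof.
  rewrite (lsum_ext _ _ (fun xy => binom_pmf t (fst xy) 0 * binom_mix n w q t (snd xy)))
    by (intros; apply pair_prob_atoms).
  unfold pairs_upto.
  rewrite (lsum_prod _ _ (fun x => binom_pmf t x 0)), !lsum_seq, binom_pmf_sum, binom_mix_sum. ring.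
Qed.

End Atoms.

Lemma pair_prob_atoms_l1 n w1 w2 q H1 H2 H3 H4 H5 H6 t :
  lsum (pairs_upto t)
    (fun xy => Rabs (pair_prob (atoms n w1 q H1 H2 H3) t xy - pair_prob (atoms n w2 q H4 H5 H6) t xy))
  = sum_f_R0 (fun y => Rabs (binom_mix n (fun k => w1 k - w2 k) q t y)) t.
Proof.
  rewrite (lsum_ext _ _ (fun xy => binom_pmf t (fst xy) 0
                                   * Rabs (binom_mix n (fun k => w1 k - w2 k) q t (snd xy)))).
  - unfold pairs_upto.
    rewrite (lsum_prod _ _ (fun x => binom_pmf t x 0)
               (fun y => Rabs (binom_mix n (fun k => w1 k - w2 k) q t y))), !lsum_seq, binom_pmf_sum.
    ring.
  - intros xy _. rewrite !pair_prob_atoms, <- Rmult_minus_distr_l, Rabs_mult, Rabs_pos_eq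
      by (apply binom_pmf_nonneg; unfold in01; lra).
    unfold binom_mix. rewrite <- minus_sum. do 3 f_equal. apply functional_extensionality.
    intros k. ring.
Qed.

Lemma binom_pmf_prod_ratio t y q q' : (y <= t)%nat ->
  binom_pmf t y q * binom_pmf t y q' / (C t y / 2 ^ t) =
  C t y * (2 * q * q') ^ y * (2 * (1 - q) * (1 - q')) ^ (t - y).
Proof.
  intros Hy. unfold binom_pmf. pose proof (C_pos t y).
  replace (2 ^ t) with (2 ^ y * 2 ^ (t - y)) by (rewrite <- pow_add; f_equal; lia).
  rewrite !Rpow_mult_distr.
  pose proof (pow_lt 2 y ltac:(lra)). pose proof (pow_lt 2 (t - y) ltac:(lra)).
  field. repeat split; lra.
Qed.

(* Chi-square kernel of two binomials with respect to Binomial(t, 1/2), whose mass function is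
   [C t y / 2 ^ t]. *)
Lemma binom_pmf_chi2_kernel t a b :
  sum_f_R0 (fun y => binom_pmf t y (1/2 + a) * binom_pmf t y (1/2 + b) / (C t y / 2 ^ t)) t
  = (1 + 4 * a * b) ^ t.
Proof.
  replace (1 + 4 * a * b)
    with (2 * (1/2 + a) * (1/2 + b) + 2 * (1 - (1/2 + a)) * (1 - (1/2 + b))) by field.
  rewrite binomial. apply sum_eq. intros y Hy. apply binom_pmf_prod_ratio, Hy.
Qed.

Lemma chi2_binom_mix t n (s u : nat -> R) :
  sum_f_R0 (fun y => (binom_mix n s (fun k => 1/2 + u k) t y) ^ 2 / (C t y / 2 ^ t)) t
  = sum_f_R0 (fun m => C t m * 4 ^ m * (sum_f_R0 (fun k => s k * u k ^ m) n) ^ 2) t.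
Proof.
  unfold binom_mix.
  transitivity (sum_f_R0 (fun k => sum_f_R0 (fun l => s k * s l * (1 + 4 * u k * u l) ^ t) n) n).
  { transitivity (sum_f_R0 (fun y => sum_f_R0 (fun k => sum_f_R0 (fun l => s k * s l *
        (binom_pmf t y (1/2 + u k) * binom_pmf t y (1/2 + u l) / (C t y / 2 ^ t))) n) n) t).
    { apply sum_eq; intros y _. rewrite sum_sq, sum_div. apply sum_eq; intros k _.
      rewrite sum_div. apply sum_eq; intros l _. unfold Rdiv. ring. }
    rewrite sum_swap. apply sum_eq; intros k _. rewrite sum_swap. apply sum_eq; intros l _.
    rewrite sum_scal_l, binom_pmf_chi2_kernel. reflexivity. }
  transitivity (sum_f_R0 (fun k => sum_f_R0 (fun m => sum_f_R0 (fun l =>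
      C t m * 4 ^ m * ((s k * u k ^ m) * (s l * u l ^ m))) n) t) n).
  { apply sum_eq; intros k _. rewrite sum_swap. apply sum_eq; intros l _.
    rewrite Rplus_comm, binomial, <- sum_scal_l. apply sum_eq; intros m _.
    rewrite pow1, !Rpow_mult_distr. ring. }
  rewrite sum_swap. apply sum_eq; intros m _.
  rewrite sum_sq, <- sum_scal_l. apply sum_eq; intros k _.
  rewrite <- sum_scal_l. apply sum_eq; intros l _. ring.
Qed.

(* Cauchy-Schwarz, via [|d| <= d^2 / (2 X p) + X p / 2]. *)
Lemma l1_le_of_chi2 t (d p : nat -> R) X :
  (forall y, (y <= t)%nat -> 0 < p y) -> sum_f_R0 p t = 1 ->
  sum_f_R0 (fun y => d y ^ 2 / p y) t <= X ^ 2 -> 0 < X ->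
  sum_f_R0 (fun y => Rabs (d y)) t <= X.
Proof.
  intros Hp Hs Hc HX.
  transitivity (sum_f_R0 (fun y => d y ^ 2 / p y / (2 * X) + X / 2 * p y) t).
  - apply sum_Rle; intros y Hy. pose proof (Hp y Hy).
    rewrite <- (pow2_abs (d y)). set (a := Rabs (d y)).
    assert (a ^ 2 / p y / (2 * X) * (2 * X * p y) = a ^ 2) by (field; lra).
    assert (0 <= (a - X * p y) ^ 2) by apply pow2_ge_0.
    assert (0 < 2 * X * p y) by (apply Rmult_lt_0_compat; lra).
    nra.
  - rewrite sum_plus, <- sum_div, sum_scal_l, Hs.
    apply Rmult_le_compat_r with (r := / (2 * X)) in Hc; [|left; apply Rinv_0_lt_compat; lra].
    unfold Rdiv at 1. replace (X ^ 2 * / (2 * X)) with (X / 2) in Hc by (field; lra). lra.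
Qed.

Lemma Rabs_sin_le u : Rabs (sin u) <= Rabs u.
Proof.
  assert (Hpos : forall v, 0 < v -> Rabs (sin v) <= v).
  { intros v Hv. pose proof (sin_lt_x v Hv). pose proof (SIN_bound v). pose proof PI2_1.
    destruct (Rle_dec 1 v); [apply Rabs_le; lra|].
    assert (0 <= sin v) by (apply sin_ge_0; lra). rewrite Rabs_pos_eq; lra. }
  destruct (Rtotal_order u 0) as [H|[H|H]].
  - pose proof (Hpos (- u) ltac:(lra)) as Hn. rewrite sin_neg, Rabs_Ropp in Hn.
    rewrite (Rabs_left u) by lra. exact Hn.
  - subst. rewrite sin_0, Rabs_R0. lra.
  - rewrite (Rabs_pos_eq u) by lra. apply Hpos, H.
Qed.

Lemma Rabs_cos_sub_le a b : Rabs (cos a - cos b) <= Rabs (a - b).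
Proof.
  rewrite form2, !Rabs_mult.
  pose proof (Rabs_sin_le ((a - b) / 2)) as Hsin.
  assert (Rabs (sin ((a + b) / 2)) <= 1) by (apply Rabs_le, SIN_bound).
  replace (Rabs (-2)) with 2 by (rewrite Rabs_left; lra).
  replace (Rabs ((a - b) / 2)) with (Rabs (a - b) / 2) in Hsin
    by (unfold Rdiv; rewrite Rabs_mult, (Rabs_pos_eq (/2)) by lra; reflexivity).
  pose proof (Rabs_pos (sin ((a - b) / 2))). pose proof (Rabs_pos (sin ((a + b) / 2))). nra.
Qed.

Lemma cos_INR_PI k : cos (INR k * PI) = (-1) ^ k.
Proof.
  induction k as [|k IH]; [simpl; rewrite Rmult_0_l, cos_0; reflexivity|].
  rewrite S_INR, Rmult_plus_distr_r, Rmult_1_l, neg_cos, IH. simpl. ring.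
Qed.

Lemma pow_m1_sq k : (-1) ^ k * (-1) ^ k = 1.
Proof. rewrite <- pow_add. replace (k + k)%nat with (2 * k)%nat by lia. apply pow_1_even. Qed.

Lemma pow_m1_range k : -1 <= (-1) ^ k <= 1.
Proof. apply Rabs_le_inv. rewrite pow_1_abs. lra. Qed.

Definition spread (n : nat) (h : R) (k : nat) : R := - INR n * h / 2 + INR k * h.
Definition node (n : nat) (h : R) (k : nat) : R := 1/2 + spread n h k.

Definition even_w (n k : nat) : R := (1 + (-1) ^ k) * binom n k / 2 ^ n.
Definition odd_w (n k : nat) : R := (1 - (-1) ^ k) * binom n k / 2 ^ n.

Lemma node_in01 n h k : 0 < h -> INR n * h <= 1 -> (k <= n)%nat -> in01 (node n h k).
Proof.
  intros Hh Hnh Hk. unfold in01, node, spread. apply le_INR in Hk.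
  pose proof (pos_INR k). nra.
Qed.

Lemma even_w_nonneg n k : 0 <= even_w n k.
Proof.
  unfold even_w. pose proof (pow_m1_range k). pose proof (binom_nonneg n k).
  apply Rdiv_nonneg; [apply Rmult_le_pos; lra | apply pow_lt; lra].
Qed.

Lemma odd_w_nonneg n k : 0 <= odd_w n k.
Proof.
  unfold odd_w. pose proof (pow_m1_range k). pose proof (binom_nonneg n k).
  apply Rdiv_nonneg; [apply Rmult_le_pos; lra | apply pow_lt; lra].
Qed.

Lemma alt_binom_sum_one n : (0 < n)%nat -> alt_binom_sum n (fun _ => 1) = 0.
Proof. intros Hn. apply (alt_binom_sum_poly n 0); [exact Hn | intros k; reflexivity]. Qed.

Lemma even_w_sum n : (0 < n)%nat -> sum_f_R0 (even_w n) n = 1.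
Proof.
  intros Hn. transitivity ((sum_f_R0 (binom n) n + alt_binom_sum n (fun _ => 1)) / 2 ^ n).
  - unfold alt_binom_sum. rewrite <- sum_plus, sum_div. apply sum_eq. intros. unfold even_w. field.
    apply pow_nonzero. lra.
  - rewrite alt_binom_sum_one, binom_sum by exact Hn. field. apply pow_nonzero. lra.
Qed.

Lemma odd_w_sum n : (0 < n)%nat -> sum_f_R0 (odd_w n) n = 1.
Proof.
  intros Hn. transitivity ((sum_f_R0 (binom n) n - alt_binom_sum n (fun _ => 1)) / 2 ^ n).
  - unfold alt_binom_sum. rewrite <- minus_sum, sum_div. apply sum_eq. intros. unfold odd_w. field.
    apply pow_nonzero. lra.
  - rewrite alt_binom_sum_one, binom_sum by exact Hn. field. apply pow_nonzero. lra.
Qed.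

Lemma even_w_sub_odd_w n k : even_w n k - odd_w n k = 2 / 2 ^ n * ((-1) ^ k * binom n k).
Proof. unfold even_w, odd_w. field. apply pow_nonzero. lra. Qed.

Lemma signed_moment_vanish n h m : (m < n)%nat ->
  sum_f_R0 (fun k => (even_w n k - odd_w n k) * spread n h k ^ m) n = 0.
Proof.
  intros Hm. transitivity (2 / 2 ^ n * alt_binom_sum n (fun k => (- INR n * h / 2 + INR k * h) ^ m)).
  - unfold alt_binom_sum. rewrite <- sum_scal_l. apply sum_eq. intros k _.
    rewrite even_w_sub_odd_w. unfold spread. ring.
  - rewrite (alt_binom_sum_poly n m); [ring | exact Hm | apply poly_deg_le_pow].
Qed.

Lemma signed_moment_bound n h m : 0 < h ->
  Rabs (sum_f_R0 (fun k => (even_w n k - odd_w n k) * spread n h k ^ m) n)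
  <= 2 * (INR n * h / 2) ^ m.
Proof.
  intros Hh. pose proof (pow_lt 2 n ltac:(lra)).
  eapply Rle_trans; [apply sum_f_R0_triangle|].
  transitivity (sum_f_R0 (fun k => 2 / 2 ^ n * binom n k * (INR n * h / 2) ^ m) n).
  - apply sum_Rle. intros k Hk.
    rewrite even_w_sub_odd_w, !Rabs_mult, pow_1_abs, Rmult_1_l,
      (Rabs_pos_eq (binom n k)), (Rabs_pos_eq (2 / 2 ^ n))
      by (apply binom_nonneg || (apply Rdiv_nonneg; lra)).
    apply Rmult_le_compat_l; [apply Rmult_le_pos; [apply Rdiv_nonneg|apply binom_nonneg]; lra|].
    rewrite <- RPow_abs. apply pow_incr. split; [apply Rabs_pos|].
    apply le_INR in Hk. pose proof (pos_INR k). unfold spread. apply Rabs_le. nra.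
  - rewrite <- scal_sum, (sum_scal_l (binom n)), binom_sum. right. field. lra.
Qed.

Definition moment_tail (t n : nat) (h : R) (m : nat) : R :=
  if (n <=? m)%nat then 4 * C t m * ((INR n * h) ^ 2) ^ m else 0.

Lemma chi2_le_moment_tail t n h : 0 < h ->
  sum_f_R0 (fun m => C t m * 4 ^ m *
              (sum_f_R0 (fun k => (even_w n k - odd_w n k) * spread n h k ^ m) n) ^ 2) t
  <= sum_f_R0 (moment_tail t n h) t.
Proof.
  intros Hh. apply sum_Rle. intros m Hm. unfold moment_tail.
  destruct (Nat.leb_spec n m) as [Hnm|Hnm]; [|rewrite signed_moment_vanish by exact Hnm; simpl; lra].
  pose proof (signed_moment_bound n h m Hh). pose proof (C_pos t m).
  set (M := sum_f_R0 (fun k => (even_w n k - odd_w n k) * spread n h k ^ m) n) in *.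
  assert (M ^ 2 <= (2 * (INR n * h / 2) ^ m) ^ 2)
    by (rewrite <- (pow2_abs M); apply pow_incr; split; [apply Rabs_pos | assumption]).
  assert (E : 4 ^ m * (2 * (INR n * h / 2) ^ m) ^ 2 = 4 * ((INR n * h) ^ 2) ^ m).
  { set (x := INR n * h).
    replace ((2 * (x / 2) ^ m) ^ 2) with (4 * ((x / 2) ^ m * (x / 2) ^ m)) by ring.
    rewrite <- Rpow_mult_distr.
    replace (4 ^ m * (4 * (x / 2 * (x / 2)) ^ m)) with (4 * (4 ^ m * (x / 2 * (x / 2)) ^ m)) by ring.
    rewrite <- Rpow_mult_distr. do 2 f_equal. field. }
  replace (4 * C t m * ((INR n * h) ^ 2) ^ m) with (C t m * (4 ^ m * (2 * (INR n * h / 2) ^ m) ^ 2))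
    by (rewrite E; ring).
  rewrite Rmult_assoc.
  apply Rmult_le_compat_l; [lra|]. apply Rmult_le_compat_l; [apply pow_le; lra | assumption].
Qed.

Definition cos_test (x0 h x : R) : R := h / PI * cos (PI * (x - x0) / h).

Lemma cos_test_lip1 x0 h : 0 < h -> lip1 (cos_test x0 h).
Proof.
  intros Hh x y _ _. unfold cos_test. pose proof PI_RGT_0.
  assert (Hc : 0 < h / PI) by (apply Rdiv_lt_0_compat; lra).
  rewrite <- Rmult_minus_distr_l, Rabs_mult, (Rabs_pos_eq (h / PI)) by lra.
  eapply Rle_trans; [apply Rmult_le_compat_l; [lra | apply Rabs_cos_sub_le]|].
  replace (PI * (x - x0) / h - PI * (y - x0) / h) with (PI / h * (x - y)) by (field; lra).
  rewrite Rabs_mult, (Rabs_pos_eq (PI / h)) by (apply Rlt_le, Rdiv_lt_0_compat; lra).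
  right. field. lra.
Qed.

Lemma cos_test_node n h k : 0 < h -> cos_test (node n h 0) h (node n h k - 0) = h / PI * (-1) ^ k.
Proof.
  intros Hh. unfold cos_test. rewrite <- cos_INR_PI. do 2 f_equal.
  unfold node, spread. simpl INR. field. lra.
Qed.

Section TwoPoint.
Variables (n : nat) (h : R).
Hypothesis n_pos : (0 < n)%nat.
Hypothesis h_pos : 0 < h.
Hypothesis nh_le1 : INR n * h <= 1.

Lemma nodes_in01 k : (k <= n)%nat -> in01 (node n h k).
Proof. apply node_in01; assumption. Qed.

Definition even_dist : dist2 :=
  atoms n (even_w n) (node n h) (even_w_nonneg n) nodes_in01 (even_w_sum n n_pos).
Definition odd_dist : dist2 :=
  atoms n (odd_w n) (node n h) (odd_w_nonneg n) nodes_in01 (odd_w_sum n n_pos).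

(* [cos_test] takes the values [+h/PI] and [-h/PI] on alternate nodes. *)
Lemma W1_even_odd_ge mu : W1 even_dist mu + W1 odd_dist mu >= 2 * h / PI.
Proof.
  pose proof PI_RGT_0. pose proof (pow_lt 2 n ltac:(lra)).
  set (f := cos_test (node n h 0) h).
  assert (Hf : lip1 f) by (apply cos_test_lip1, h_pos).
  pose proof (W1_ge_lip even_dist mu f Hf) as Heven.
  pose proof (W1_ge_lip odd_dist mu _ (lip1_opp f Hf)) as Hodd.
  rewrite E1_opp in Hodd by exact Hf.
  unfold even_dist, odd_dist in Heven, Hodd. rewrite Delta_E_atoms in Heven, Hodd.
  assert (Hsum : sum_f_R0 (fun k => even_w n k * f (node n h k - 0)) n
               + sum_f_R0 (fun k => odd_w n k * (-1 * f (node n h k - 0))) n = 2 * h / PI).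
  { rewrite <- sum_plus.
    transitivity (sum_f_R0 (fun k => h / PI * (2 / 2 ^ n) * binom n k) n).
    - apply sum_eq. intros k _. unfold f. rewrite cos_test_node by exact h_pos.
      transitivity (h / PI * (-1) ^ k * (even_w n k - odd_w n k)); [ring|].
      rewrite even_w_sub_odd_w.
      transitivity (h / PI * (2 / 2 ^ n) * binom n k * ((-1) ^ k * (-1) ^ k)); [ring|].
      rewrite pow_m1_sq. ring.
    - rewrite sum_scal_l, binom_sum. field. lra. }
  unfold even_dist, odd_dist. lra.
Qed.

Lemma pair_prob_even_odd_l1_le t X : 0 < X -> sum_f_R0 (moment_tail t n h) t <= X ^ 2 ->
  lsum (pairs_upto t) (fun xy => Rabs (pair_prob even_dist t xy - pair_prob odd_dist t xy)) <= X.
Proof.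
  intros HX Htail. pose proof (pow_lt 2 t ltac:(lra)).
  unfold even_dist, odd_dist. rewrite pair_prob_atoms_l1.
  apply (l1_le_of_chi2 t _ (fun y => C t y / 2 ^ t)); [| | |exact HX].
  - intros y _. apply Rdiv_lt_0_compat; [apply C_pos | lra].
  - rewrite <- sum_div. transitivity ((1 + 1) ^ t / 2 ^ t).
    + rewrite binomial. f_equal. apply sum_eq. intros. rewrite !pow1. ring.
    + replace (1 + 1) with 2 by ring. field. lra.
  - eapply Rle_trans; [|exact Htail]. eapply Rle_trans; [|apply chi2_le_moment_tail, h_pos].
    rewrite <- (chi2_binom_mix t n (fun k => even_w n k - odd_w n k) (spread n h)).
    right. reflexivity.
Qed.

Lemma two_point_risk_ge t N X (g : list (nat * nat) -> dist1) :
  0 < X -> sum_f_R0 (moment_tail t n h) t <= X ^ 2 -> INR N * X <= 1/2 ->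
  exists Rd, risk t N Rd g >= h / (2 * PI).
Proof.
  intros HX Htail HNX. pose proof PI_RGT_0.
  assert (Hsum : risk t N even_dist g + risk t N odd_dist g >= (2 * h / PI) / 2).
  { apply risk_sum_ge with (T := X).
    all: try apply pair_prob_atoms_nonneg; try apply pair_prob_atoms_sum.
    - apply W1_even_odd_ge.
    - apply Rlt_le, Rdiv_lt_0_compat; lra.
    - apply pair_prob_even_odd_l1_le; assumption.
    - exact HNX. }
  destruct (Rle_dec (h / (2 * PI)) (risk t N even_dist g)).
  - exists even_dist. lra.
  - exists odd_dist.
    replace ((2 * h / PI) / 2) with (2 * (h / (2 * PI))) in Hsum by (field; lra). lra.
Qed.

End TwoPoint.

Lemma exp_pow_INR x m : exp x ^ m = exp (x * INR m).
Proof.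
  induction m as [|m IH]; [simpl; rewrite Rmult_0_r, exp_0; reflexivity|].
  rewrite S_INR. simpl pow. rewrite IH, <- exp_plus. f_equal. ring.
Qed.

Lemma one_plus_inv_pow_le_3 m : (0 < m)%nat -> (1 + 1 / INR m) ^ m <= 3.
Proof.
  intros Hm. assert (0 < INR m) by (apply lt_0_INR, Hm).
  assert (0 < 1 / INR m) by (apply Rdiv_lt_0_compat; lra).
  eapply Rle_trans; [apply pow_incr; split; [lra | apply exp_ineq1_le]|].
  rewrite exp_pow_INR. replace (1 / INR m * INR m) with 1 by (field; lra). apply exp_le_3.
Qed.

Lemma pow_div3_le_fact m : (INR m / 3) ^ m <= INR (Factorial.fact m).
Proof.
  induction m as [|m IH]; [simpl; lra|].
  rewrite fact_simpl, mult_INR, S_INR. simpl pow.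
  destruct m as [|m]; [simpl; lra|].
  set (x := INR (S m)) in *. assert (0 < x) by (apply lt_0_INR; lia).
  assert (Hsplit : ((x + 1) / 3) ^ S m = (x / 3) ^ S m * (1 + 1 / x) ^ S m)
    by (rewrite <- Rpow_mult_distr; f_equal; field; lra).
  pose proof (one_plus_inv_pow_le_3 (S m) ltac:(lia)) as H3. fold x in H3.
  assert (0 <= (x / 3) ^ S m) by (apply pow_le; lra).
  pose proof (INR_fact_lt_0 (S m)).
  rewrite Hsplit.
  apply Rle_trans with ((x + 1) / 3 * (INR (Factorial.fact (S m)) * 3)); [|right; field].
  apply Rmult_le_compat_l; [apply Rdiv_nonneg; lra|].
  apply Rle_trans with (INR (Factorial.fact (S m)) * (1 + 1 / x) ^ S m).
  - assert (0 < 1 / x) by (apply Rdiv_lt_0_compat; lra).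
    apply Rmult_le_compat_r; [apply pow_le; lra | exact IH].
  - apply Rmult_le_compat_l; lra.
Qed.

Lemma fact_le_pow_fact_sub t m : (m <= t)%nat ->
  INR (Factorial.fact t) <= INR t ^ m * INR (Factorial.fact (t - m)).
Proof.
  induction m as [|m IH]; intros Hm; [rewrite Nat.sub_0_r; simpl; lra|].
  eapply Rle_trans; [apply IH; lia|].
  replace (t - m)%nat with (S (t - S m)) by lia. rewrite fact_simpl, mult_INR. simpl pow.
  pose proof (INR_fact_lt_0 (t - S m)). pose proof (pow_le (INR t) m (pos_INR t)).
  assert (INR (S (t - S m)) <= INR t) by (apply le_INR; lia).
  apply Rle_trans with (INR t ^ m * (INR t * INR (Factorial.fact (t - S m)))); [|right; ring].
  apply Rmult_le_compat_l; [|apply Rmult_le_compat_r]; lra.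
Qed.

Lemma C_le_pow_div_fact t m : (m <= t)%nat -> C t m <= INR t ^ m / INR (Factorial.fact m).
Proof.
  intros Hm. unfold C. pose proof (fact_le_pow_fact_sub t m Hm).
  pose proof (INR_fact_lt_0 m). pose proof (INR_fact_lt_0 (t - m)).
  unfold Rdiv. rewrite Rinv_mult.
  apply Rle_trans with (INR t ^ m * INR (Factorial.fact (t - m))
                        * (/ INR (Factorial.fact m) * / INR (Factorial.fact (t - m)))).
  - apply Rmult_le_compat_r; [|assumption].
    apply Rlt_le, Rmult_lt_0_compat; apply Rinv_0_lt_compat; assumption.
  - right. field. lra.
Qed.

Definition quarter_tail (n m : nat) : R := if (n <=? m)%nat then (1/4) ^ m else 0.

Lemma moment_tail_le t n h m : (m <= t)%nat -> INR t * (INR n * h) ^ 2 <= INR n / 16 ->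
  moment_tail t n h m <= 4 * quarter_tail n m.
Proof.
  intros Hm Hz. unfold moment_tail, quarter_tail. destruct (Nat.leb_spec n m) as [Hnm|]; [|lra].
  set (z := (INR n * h) ^ 2) in *.
  assert (0 <= z) by apply pow2_ge_0.
  pose proof (INR_fact_lt_0 m). pose proof (pos_INR t). apply le_INR in Hnm.
  rewrite Rmult_assoc. apply Rmult_le_compat_l; [lra|].
  apply Rle_trans with ((INR t * z) ^ m / INR (Factorial.fact m)).
  { rewrite Rpow_mult_distr.
    replace (INR t ^ m * z ^ m / INR (Factorial.fact m))
      with (INR t ^ m / INR (Factorial.fact m) * z ^ m) by (field; lra).
    apply Rmult_le_compat_r; [apply pow_le; assumption | apply C_le_pow_div_fact, Hm]. }
  apply Rle_trans with ((3/16) ^ m * ((INR m / 3) ^ m / INR (Factorial.fact m))).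
  { replace ((3/16) ^ m * ((INR m / 3) ^ m / INR (Factorial.fact m)))
      with ((3/16 * (INR m / 3)) ^ m / INR (Factorial.fact m))
      by (rewrite Rpow_mult_distr; field; lra).
    apply Rmult_le_compat_r; [left; apply Rinv_0_lt_compat; lra|].
    apply pow_incr. split; [apply Rmult_le_pos; assumption | lra]. }
  apply Rle_trans with ((3/16) ^ m); [|apply pow_incr; lra].
  rewrite <- (Rmult_1_r ((3/16) ^ m)) at 2.
  apply Rmult_le_compat_l; [apply pow_le; lra|].
  apply (Rmult_le_reg_r (INR (Factorial.fact m))); [lra|].
  unfold Rdiv. rewrite Rmult_assoc, Rinv_l, Rmult_1_r, Rmult_1_l by lra. apply pow_div3_le_fact.
Qed.

Lemma quarter_tail_sum_le n T : sum_f_R0 (quarter_tail n) T <= 4/3 * (1/4) ^ n.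
Proof.
  assert (H : forall t, ((t < n)%nat /\ sum_f_R0 (quarter_tail n) t = 0)
                \/ sum_f_R0 (quarter_tail n) t + 4/3 * (1/4) ^ (S t) <= 4/3 * (1/4) ^ n).
  { unfold quarter_tail. induction t as [|t IH].
    - simpl. destruct n as [|n']; [right; simpl; lra | left; split; [lia | reflexivity]].
    - simpl sum_f_R0. destruct IH as [[Hlt Hzero]|Hle].
      + rewrite Hzero. destruct (Nat.leb_spec n (S t)).
        * right. replace n with (S t) by lia. simpl. lra.
        * left. split; [lia | lra].
      + right. pose proof (pow_le (1/4) t ltac:(lra)).
        destruct (Nat.leb_spec n (S t)); simpl pow in *; lra. }
  pose proof (pow_le (1/4) n ltac:(lra)). pose proof (pow_le (1/4) (S T) ltac:(lra)).
  destruct (H T) as [[_ HT]|HT]; lra.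
Qed.

Lemma moment_tail_sum_le t n h : INR t * (INR n * h) ^ 2 <= INR n / 16 ->
  sum_f_R0 (moment_tail t n h) t <= (3 * (1/2) ^ n) ^ 2.
Proof.
  intros Hz.
  apply Rle_trans with (sum_f_R0 (fun m => 4 * quarter_tail n m) t).
  - apply sum_Rle. intros m Hm. apply moment_tail_le; assumption.
  - rewrite sum_scal_l. pose proof (quarter_tail_sum_le n t). pose proof (pow_le (1/4) n ltac:(lra)).
    replace ((3 * (1/2) ^ n) ^ 2) with (9 * (1/4) ^ n); [lra|].
    replace (1/4) with (1/2 * (1/2)) by field. rewrite Rpow_mult_distr. ring.
Qed.

Lemma risk_ge_inv_sqrt t N n (g : list (nat * nat) -> dist1) :
  (0 < n)%nat -> (n <= 16 * t)%nat -> 6 * INR N <= 2 ^ n ->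
  exists Rd, risk t N Rd g >= 1 / (8 * PI * sqrt (INR n * INR t)).
Proof.
  intros Hn Hnt HN. pose proof PI_RGT_0.
  assert (Hn1 : 1 <= INR n) by (apply (le_INR 1); lia).
  assert (Hnt' : INR n <= 16 * INR t)
    by (apply le_INR in Hnt; rewrite mult_INR in Hnt; simpl in Hnt; lra).
  set (s := sqrt (INR n * INR t)).
  assert (Hs : 0 < s) by (apply sqrt_lt_R0; nra).
  assert (Hss : s * s = INR n * INR t) by (apply sqrt_sqrt; nra).
  destruct (two_point_risk_ge n (1 / (4 * s)) Hn ltac:(apply Rdiv_lt_0_compat; lra))
    with (t := t) (N := N) (X := 3 * (1/2) ^ n) (g := g) as [Rd HRd].
  - apply (Rmult_le_reg_r (4 * s)); [lra|].
    replace (INR n * (1 / (4 * s)) * (4 * s)) with (INR n) by (field; lra). nra.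
  - pose proof (pow_lt (1/2) n ltac:(lra)). lra.
  - apply moment_tail_sum_le. right.
    replace ((INR n * (1 / (4 * s))) ^ 2) with (INR n ^ 2 / (16 * (s * s))) by (field; lra).
    rewrite Hss. field. lra.
  - replace ((1/2) ^ n) with (/ 2 ^ n) by (rewrite <- pow_inv; f_equal; field).
    pose proof (pow_lt 2 n ltac:(lra)).
    apply (Rmult_le_reg_r (2 ^ n)); [lra|].
    replace (INR N * (3 * / 2 ^ n) * 2 ^ n) with (3 * INR N) by (field; lra). lra.
  - exists Rd. replace (1 / (8 * PI * s)) with (1 / (4 * s) / (2 * PI)) by (field; lra). exact HRd.
Qed.

(* With [n = t + 1] nodes the two priors have the same first [t] moments, so the observations
   have identical laws. *)
Lemma risk_ge_inv t N (g : list (nat * nat) -> dist1) :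
  exists Rd, risk t N Rd g >= 1 / (2 * PI * (INR t + 1)).
Proof.
  pose proof PI_RGT_0. pose proof (pos_INR t). pose proof (pos_INR N).
  destruct (two_point_risk_ge (S t) (1 / INR (S t)) ltac:(lia))
    with (t := t) (N := N) (X := 1 / (2 * (INR N + 1))) (g := g) as [Rd HRd].
  - rewrite S_INR. apply Rdiv_lt_0_compat; lra.
  - rewrite S_INR. right. field. lra.
  - apply Rdiv_lt_0_compat; lra.
  - apply Rle_trans with 0; [|apply pow2_ge_0].
    rewrite <- (sum_zero t). right. apply sum_eq. intros m Hm. unfold moment_tail.
    destruct (Nat.leb_spec (S t) m); [lia | reflexivity].
  - apply (Rmult_le_reg_r (2 * (INR N + 1))); [lra|].
    replace (INR N * (1 / (2 * (INR N + 1))) * (2 * (INR N + 1))) with (INR N) by (field; lra). lra.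
  - exists Rd. rewrite S_INR in HRd.
    replace (1 / (2 * PI * (INR t + 1))) with (1 / (INR t + 1) / (2 * PI))
      by (field; lra). exact HRd.
Qed.

Lemma N_ge_2_of_bound t N a : (0 < t)%nat -> (0 < N)%nat ->
  INR t <= Rpower (INR N) a / 36 -> (2 <= N)%nat.
Proof.
  intros Ht HN Hb. destruct (Nat.eq_dec N 1) as [->|]; [|lia].
  apply (le_INR 1) in Ht. unfold Rpower in Hb. simpl INR in Hb, Ht.
  rewrite ln_1, Rmult_0_r, exp_0 in Hb. lra.
Qed.

Lemma ln2_ge_half : 1/2 <= ln 2.
Proof.
  assert (exp (1/2) <= 2).
  { assert (exp (1/2) * exp (1/2) = exp 1) by (rewrite <- exp_plus; f_equal; field).
    pose proof exp_le_3. pose proof (exp_pos (1/2)). nra. }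
  rewrite <- (ln_exp (1/2)). apply ln_le; [apply exp_pos | assumption].
Qed.

Lemma log2_add4_le_ln N : (2 <= N)%nat -> INR (Nat.log2 N + 4) <= 10 * ln (INR N).
Proof.
  intros HN. destruct (Nat.log2_spec N ltac:(lia)) as [Hlow _].
  apply le_INR in Hlow. rewrite pow_INR in Hlow. simpl INR in Hlow.
  replace (1 + 1) with 2 in Hlow by ring.
  assert (Hk : INR (Nat.log2 N) * ln 2 <= ln (INR N))
    by (rewrite <- ln_pow by lra; apply ln_le; [apply pow_lt; lra | exact Hlow]).
  assert (H2 : ln 2 <= ln (INR N))
    by (apply ln_le; [lra | apply (le_INR 2) in HN; simpl in HN; lra]).
  pose proof ln2_ge_half. pose proof (pos_INR (Nat.log2 N)).
  rewrite plus_INR. simpl INR. nra.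
Qed.

Lemma six_le_pow_log2_add4 N : (0 < N)%nat -> 6 * INR N <= 2 ^ (Nat.log2 N + 4).
Proof.
  intros HN. destruct (Nat.log2_spec N HN) as [_ Hup].
  apply lt_INR in Hup. rewrite pow_INR in Hup. simpl INR in Hup.
  replace (1 + 1) with 2 in Hup by ring.
  replace (Nat.log2 N + 4)%nat with (S (Nat.log2 N) + 3)%nat by lia.
  rewrite pow_add. simpl (2 ^ 3). pose proof (pos_INR N). lra.
Qed.

Lemma Rmax_inv_le c a b D : 0 < c -> 0 < a -> 0 < b -> 0 < D -> D <= c * a -> D <= c * b ->
  1 / c * Rmax (1 / a) (1 / b) <= 1 / D.
Proof.
  intros Hc Ha Hb HD HDa HDb. unfold Rmax. destruct (Rle_dec (1 / a) (1 / b));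
    [replace (1 / c * (1 / b)) with (1 / (c * b)) by (field; lra)
    | replace (1 / c * (1 / a)) with (1 / (c * a)) by (field; lra)];
    unfold Rdiv; rewrite !Rmult_1_l; apply Rinv_le_contravar; assumption.
Qed.

Definition minimax_rate (t N : nat) : R := Rmax (1 / INR t) (1 / sqrt (INR t * ln (INR N))).

Lemma risk_ge_rate_large_t t N (g : list (nat * nat) -> dist1) :
  (2 <= N)%nat -> (Nat.log2 N + 4 <= 16 * t)%nat ->
  exists Rd, risk t N Rd g >= 1/200 * minimax_rate t N.
Proof.
  intros HN2 Hnt. pose proof (log2_add4_le_ln N HN2) as Hn_ln.
  set (n := (Nat.log2 N + 4)%nat) in *.
  destruct (risk_ge_inv_sqrt t N n g) as [Rd HRd];
    [unfold n; lia | exact Hnt | apply six_le_pow_log2_add4; lia |].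
  exists Rd. apply Rle_ge. eapply Rle_trans; [|apply Rge_le, HRd]. unfold minimax_rate.
  pose proof PI_RGT_0. pose proof PI_4.
  assert (Hn4 : 4 <= INR n)
    by (unfold n; rewrite plus_INR; simpl; pose proof (pos_INR (Nat.log2 N)); lra).
  assert (Hnt' : INR n <= 16 * INR t)
    by (apply le_INR in Hnt; rewrite mult_INR in Hnt; simpl in Hnt; lra).
  set (r := sqrt (INR t * ln (INR N))).
  assert (Hr : 0 < r) by (apply sqrt_lt_R0; nra).
  assert (Hrr : r * r = INR t * ln (INR N)) by (apply sqrt_sqrt; nra).
  set (s := sqrt (INR n * INR t)).
  assert (Hs : 0 < s) by (apply sqrt_lt_R0; nra).
  assert (Hss : s * s = INR n * INR t) by (apply sqrt_sqrt; nra).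
  assert (Hst : s <= 4 * INR t) by nra.
  assert (Hsr : s <= 4 * r) by nra.
  assert (HPIs : 8 * PI * s <= 32 * s) by nra.
  apply Rmax_inv_le; nra.
Qed.

Lemma risk_ge_rate_small_t t N (g : list (nat * nat) -> dist1) :
  (0 < t)%nat -> (2 <= N)%nat -> (16 * t < Nat.log2 N + 4)%nat ->
  exists Rd, risk t N Rd g >= 1/200 * minimax_rate t N.
Proof.
  intros Ht HN2 Htn. pose proof (log2_add4_le_ln N HN2) as Hn_ln.
  destruct (risk_ge_inv t N g) as [Rd HRd].
  exists Rd. apply Rle_ge. eapply Rle_trans; [|apply Rge_le, HRd]. unfold minimax_rate.
  pose proof PI_RGT_0. pose proof PI_4.
  assert (Ht1 : 1 <= INR t) by (apply (le_INR 1); lia).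
  assert (Htn' : 16 * INR t < INR (Nat.log2 N + 4))
    by (apply lt_INR in Htn; rewrite mult_INR in Htn; simpl in Htn; lra).
  set (r := sqrt (INR t * ln (INR N))).
  assert (Hr : 0 < r) by (apply sqrt_lt_R0; nra).
  assert (Hrr : r * r = INR t * ln (INR N)) by (apply sqrt_sqrt; nra).
  assert (Htr : INR t <= r) by nra.
  assert (HPIt : 2 * PI * (INR t + 1) <= 16 * INR t) by nra.
  apply Rmax_inv_le; nra.
Qed.

Theorem theorem1 :
  exists c : R, 0 < c /\
  forall t N : nat, (0 < t)%nat -> (0 < N)%nat ->
    INR t <= Rpower (INR N) (2 * (exp 4 - 1)) / 36 ->
    forall g : list (nat * nat) -> dist1,
    exists Rd : dist2,
      risk t N Rd g >= c * Rmax (1 / INR t) (1 / sqrt (INR t * ln (INR N))).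
Proof.
  exists (1/200). split; [lra|].
  intros t N Ht HN Hbound g.
  pose proof (N_ge_2_of_bound t N _ Ht HN Hbound) as HN2.
  destruct (Compare_dec.le_lt_dec (Nat.log2 N + 4) (16 * t)).
  - apply risk_ge_rate_large_t; assumption.
  - apply risk_ge_rate_small_t; assumption.
Qed.
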